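(* Let $n\ge3$ and let $P$ be the $n\times n$ matrix whose first row has all entries equal to $1/n$ and whose row $i$, for $2\le i\le n$, has entry $1$ in column $i-1$ and zeros elsewhere. Then $P$ is SIA and its SIA index equals $n-1$; in particular the set $\mathcal V_{n-1}$ is nonempty.
   Context: Let $\mathcal N=\{1,\ldots,n\}$. A matrix is stochastic if it is entrywise nonnegative with row sums $1$. For stochastic $P$ and $\mathcal A\subseteq\mathcal N$, $F_P(\mathcal A)=\{j:\ p_{ij}>0\text{ for some } i\in\mathcal A\}$, $F_P^1=F_P$, $F_P^k(\mathcal A)=F_P(F_P^{k-1}(\mathcal A))$. $P$ is SIA if $\lim_{m\to\infty}P^m=\mathbf 1c^T$ for some nonnegative $c$ with entries summing to $1$. For an SIA matrix $P$ and each unordered pair of disjoint nonempty sets $\mathcal A,\tilde{\mathcal A}\subseteq\mathcal N$, let $s(\mathcal A,\tilde{\mathcal A})$ be the smallest integer $k\ge1$ such that either (i) $F_P^k(\mathcal A)\cap F_P^k(\tilde{\mathcal A})\ne\emptyset$, or (ii) $F_P^k(\mathcal A)\cap F_P^k(\tilde{\mathcal A})=\emptyset$ and $|F_P^k(\mathcal A)\cup F_P^k(\tilde{\mathcal A})|>|\mathcal A\cup\tilde{\mathcal A}|$. The SIA index of $P$ is the maximum of $s(\mathcal A,\tilde{\mathcal A})$ over all such pairs. $\mathcal V_k$ denotes the set of $n\times n$ SIA matrices with SIA index exactly $k$. *)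

From HB Require Import structures.
From mathcomp Require Import all_boot all_order all_algebra.
Set Implicit Arguments. Unset Strict Implicit. Unset Printing Implicit Defensive.
Import Order.TTheory GRing.Theory Num.Theory.
Local Open Scope ring_scope.

Section SIA.
Variables (R : archiRealFieldType) (n : nat).
Implicit Types (P : 'M[R]_n) (A B : {set 'I_n}).

(* P^m, defined for every n (the square-matrix ring needs n = n'.+1). *)
Definition mxpow P (m : nat) : 'M[R]_n := iter m (mulmx P) 1%:M.

Definition stochastic P : Prop :=
  (forall i j, 0 <= P i j) /\ (forall i, \sum_j P i j = 1).

Definition SIA P : Prop :=
  stochastic P /\
  exists c : 'I_n -> R,
    (forall j, 0 <= c j) /\ \sum_j c j = 1 /\
    forall eps : R, 0 < eps -> exists N : nat, forall m : nat, (N <= m)%N ->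
      forall i j, `|mxpow P m i j - c j| < eps.

Definition FP P A : {set 'I_n} := [set j | [exists i in A, 0 < P i j]].
Definition FPk P (k : nat) A : {set 'I_n} := iter k (FP P) A.

Definition sia_cond P A B (k : nat) : bool :=
  (FPk P k A :&: FPk P k B != set0) ||
  ((FPk P k A :&: FPk P k B == set0) &&
   (#|A :|: B| < #|FPk P k A :|: FPk P k B|)%N).

Definition s_is P A B (k : nat) : bool :=
  [&& (0 < k)%N, sia_cond P A B k &
      [forall k' : 'I_k, (0 < k')%N ==> ~~ sia_cond P A B k']].

Definition admissible_pair A B : bool :=
  [&& A != set0, B != set0 & [disjoint A & B]].

Definition sia_index_is P (k : nat) : Prop :=
  (forall A B, admissible_pair A B ->
     exists2 k', s_is P A B k' & (k' <= k)%N) /\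
  (exists A B, admissible_pair A B /\ s_is P A B k).

Definition V_set (k : nat) : 'M[R]_n -> Prop :=
  fun P => SIA P /\ sia_index_is P k.

End SIA.

(* The matrix of the theorem (0-based indices): row 0 is constantly 1/n,
   row i >= 1 has a 1 in column i-1 and zeros elsewhere. *)
Definition Pex (R : archiRealFieldType) (n : nat) : 'M[R]_n :=
  \matrix_(i, j) if val i == 0%N then (n%:R)^-1
                 else if val j == (val i).-1 then 1 else 0.

(* P sends each index i > 0 to i - 1 and sends 0 to every index.  So if m is the
   least element of A :|: B, then for k <= m the iterates F^k(A), F^k(B) are
   disjoint translates of A and B, while at step m + 1 one of them is everything:
   s(A, B) = m + 1 <= n - 1, with equality for A = {n-2}, B = {n-1}.
   Following the chain i -> i - 1 -> ... -> 0, every row of P^n gives mass at least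
   n^-n to column 0; by Doeblin's argument the columns of P^m then become constant
   geometrically fast, and since the row vector proportional to (n, n-1, ..., 1)
   is stationary, the constant is its entry. *)

From HB Require Import structures.
From mathcomp Require Import all_boot all_order all_algebra.
From mathcomp Require Import zify lra.
Set Implicit Arguments. Unset Strict Implicit. Unset Printing Implicit Defensive.
Import Order.TTheory GRing.Theory Num.Theory.
Local Open Scope ring_scope.

Section RealFacts.
Variable R : archiRealFieldType.

Lemma ler_term_sum (T : finType) (F : T -> R) a :
  (forall k, 0 <= F k) -> F a <= \sum_k F k.
Proof. by move=> F0; rewrite (bigD1 a) //= lerDl sumr_ge0. Qed.

Lemma bernoulli_mul_expr_le1 (d : R) k :
  0 <= d <= 1 -> (1 + k%:R * d) * (1 - d) ^+ k <= 1.
Proof.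
case/andP=> d0 d1; elim: k => [|k IH]; first by rewrite mul0r addr0 expr0 mulr1.
rewrite exprS mulrA; apply: le_trans IH; apply: ler_wpM2r.
  by rewrite exprn_ge0 // subr_ge0.
have k0 : 0 <= k%:R :> R by rewrite ler0n.
rewrite -natr1; nra.
Qed.

Lemma exists_expr_lt (d eps : R) :
  0 < d <= 1 -> 0 < eps -> exists k : nat, (1 - d) ^+ k < eps.
Proof.
case/andP=> d0 d1 eps0.
have ed0 : 0 < eps * d by rewrite mulr_gt0.
have /archi_boundP : 0 <= (eps * d)^-1 by rewrite invr_ge0 ltW.
set k := Num.Def.archi_bound _ => hk; exists k.
move: hk; rewrite -(ltr_pM2r ed0) mulVf ?gt_eqF // => hk.
have := @bernoulli_mul_expr_le1 d k; rewrite ltW ?d1 //= => bk.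
have q0 : 0 <= (1 - d) ^+ k by rewrite exprn_ge0 // subr_ge0.
have k0 : 0 <= k%:R :> R by rewrite ler0n.
nra.
Qed.
End RealFacts.

Section Stochastic.
Variables (R : archiRealFieldType) (n : nat).
Implicit Types (P S T : 'M[R]_n).

Lemma mxpowS P m : mxpow P m.+1 = P *m mxpow P m.
Proof. by []. Qed.

Lemma mxpowD P a b : mxpow P (a + b) = mxpow P a *m mxpow P b.
Proof.
elim: a => [|a IH]; first by rewrite mul1mx.
by rewrite addSn !mxpowS IH mulmxA.
Qed.

Lemma stochastic1 : stochastic (1%:M : 'M[R]_n).
Proof.
split=> [i j|i]; first by rewrite mxE ler0n.
rewrite (bigD1 i) //= mxE eqxx big1 ?addr0 // => j ji.
by rewrite mxE eq_sym (negbTE ji).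
Qed.

Lemma stochasticM S T : stochastic S -> stochastic T -> stochastic (S *m T).
Proof.
case=> S0 S1 [T0 T1]; split=> [i j|i].
  by rewrite mxE sumr_ge0 // => k _; rewrite mulr_ge0.
under eq_bigr do rewrite mxE.
rewrite exchange_big /= -(S1 i); apply: eq_bigr => k _.
by rewrite -mulr_sumr T1 mulr1.
Qed.

Lemma stochastic_mxpow P m : stochastic P -> stochastic (mxpow P m).
Proof. by move=> SP; elim: m => [|m IH]; [exact: stochastic1 | exact: stochasticM]. Qed.

Lemma stochastic_le1 S i j : stochastic S -> S i j <= 1.
Proof. by case=> S0 /(_ i) <-; apply: ler_term_sum. Qed.

Lemma FP_neq0 S (A : {set 'I_n}) : stochastic S -> A != set0 -> FP S A != set0.
Proof.
case=> S0 S1 /set0Pn[i iA]; apply/set0Pn.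
have [j Sij] : exists j, 0 < S i j.
  apply/existsP; apply: contraT => /existsPn no_pos.
  have : \sum_j S i j = 0.
    by apply: big1 => j _; apply/eqP; rewrite eq_le S0 andbT leNgt no_pos.
  by rewrite S1 => /eqP; rewrite oner_eq0.
by exists j; rewrite inE; apply/existsP; exists i; rewrite iA.
Qed.

Lemma FPk_neq0 S k (A : {set 'I_n}) : stochastic S -> A != set0 -> FPk S k A != set0.
Proof. by move=> SS A_neq0; elim: k => // k IH; rewrite /FPk iterS FP_neq0. Qed.

(* Both averages give weight at least delta to v z, so they lie between
   vmin + delta (v z - vmin) and vmax - delta (vmax - v z). *)
Lemma stochastic_osc_contract S (v : 'I_n -> R) (z : 'I_n) (delta d : R) :
  stochastic S -> (forall i, delta <= S i z) -> (forall k k', v k - v k' <= d) ->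
  forall i i', \sum_k S i k * v k - \sum_k S i' k * v k <= (1 - delta) * d.
Proof.
move=> SS Sz vd i i'; case: (SS) => S0 S1.
have [b _ vb] := @arg_maxP _ _ _ z predT v isT.
have [a _ va] := @arg_minP _ _ _ z predT v isT.
set vmax := v _ in vb; set vmin := v _ in va.
have {}vb k : v k <= vmax by exact: vb.
have {}va k : vmin <= v k by exact: va.
have upper : \sum_k S i k * v k <= vmax - delta * (vmax - v z).
  have -> : \sum_k S i k * v k = vmax - \sum_k S i k * (vmax - v k).
    rewrite (eq_bigr _ (fun k _ => mulrBr _ _ _)) sumrB -mulr_suml S1 mul1r.
    by rewrite opprB addrC subrK.
  rewrite lerD2l lerN2; apply: le_trans (ler_term_sum z _) => [|k].
    by rewrite ler_wpM2r ?subr_ge0.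
  by rewrite mulr_ge0 ?subr_ge0.
have lower : vmin + delta * (v z - vmin) <= \sum_k S i' k * v k.
  have -> : \sum_k S i' k * v k = vmin + \sum_k S i' k * (v k - vmin).
    rewrite (eq_bigr _ (fun k _ => mulrBr _ _ _)) sumrB -mulr_suml S1 mul1r.
    by rewrite addrC subrK.
  rewrite lerD2l; apply: le_trans (ler_term_sum z _) => [|k].
    by rewrite ler_wpM2r ?subr_ge0.
  by rewrite mulr_ge0 ?subr_ge0.
have delta1 : delta <= 1 := le_trans (Sz z) (stochastic_le1 z z SS).
have : (1 - delta) * (vmax - vmin) <= (1 - delta) * d by rewrite ler_wpM2l ?subr_ge0 ?vd.
lra.
Qed.

Section Doeblin.
Variables (P : 'M[R]_n) (N : nat) (z : 'I_n) (delta : R).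
Hypotheses (P_stoch : stochastic P) (Doeblin : forall i, delta <= mxpow P N i z).

Lemma mxpow_osc k m : (k * N <= m)%N ->
  forall i i' j, mxpow P m i j - mxpow P m i' j <= (1 - delta) ^+ k.
Proof.
elim: k m => [|k IH] m km i i' j.
  have := stochastic_le1 i j (stochastic_mxpow m P_stoch).
  by case: (stochastic_mxpow m P_stoch) => /(_ i' j) ? _; lra.
have -> : m = (N + (m - N))%N by move: km; rewrite mulSn; lia.
rewrite mxpowD !mxE exprS; apply: stochastic_osc_contract => //.
  exact: stochastic_mxpow.
by move=> a b; apply: IH; move: km; rewrite mulSn; lia.
Qed.

Lemma SIA_Doeblin (c : 'rV[R]_n) : 0 < delta ->
  (forall j, 0 <= c 0 j) -> \sum_j c 0 j = 1 -> c *m P = c -> SIA P.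
Proof.
move=> delta0 c0 c1 cP; split=> //; exists (c 0); split=> //; split=> // eps eps0.
have delta01 : 0 < delta <= 1.
  by rewrite delta0 (le_trans (Doeblin z)) // stochastic_le1 //; apply: stochastic_mxpow.
have [k hk] := exists_expr_lt delta01 eps0.
exists (k * N)%N => m km i j.
have cPm : c *m mxpow P m = c.
  by elim: m {km} => [|m IH]; rewrite ?mulmx1 // mxpowS mulmxA cP.
have -> : c 0 j = \sum_l c 0 l * mxpow P m l j by rewrite -{1}cPm mxE.
rewrite -[mxpow P m i j]mul1r -c1 mulr_suml -sumrB.
apply: le_lt_trans (ler_norm_sum _ _ _) (le_lt_trans _ hk).
apply: le_trans (_ : \sum_l c 0 l * (1 - delta) ^+ k <= _).
  2: by rewrite -mulr_suml c1 mul1r.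
apply: ler_sum => l _.
rewrite -mulrBr normrM ger0_norm // ler_wpM2l // ler_norml lerNl opprB.
by apply/andP; split; apply: mxpow_osc.
Qed.

End Doeblin.
End Stochastic.

Section PexMatrix.
Variables (R : archiRealFieldType) (n : nat).
Hypothesis n_gt0 : (0 < n)%N.
Local Notation P := (Pex R n).
Let i0 : 'I_n := Ordinal n_gt0.
Implicit Types (A B X : {set 'I_n}).

Lemma PexE i j : P i j =
  if val i == 0%N then n%:R^-1 else if val i == (val j).+1 then 1 else 0.
Proof.
rewrite mxE; case: eqP => // /eqP i_neq0.
by rewrite -[in RHS](prednK (_ : 0 < val i)%N) ?lt0n // eqSS [in RHS]eq_sym.
Qed.

Lemma ord_pred_subproof (i : 'I_n) : ((val i).-1 < n)%N.
Proof. exact: leq_ltn_trans (leq_pred _) (ltn_ord i). Qed.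

Definition ord_pred i := Ordinal (ord_pred_subproof i).

Lemma Pex_pred i : val i != 0%N -> P i (ord_pred i) = 1.
Proof. by move=> /negbTE i_neq0; rewrite PexE i_neq0 /= prednK ?eqxx // lt0n i_neq0. Qed.

Lemma Pex_gt0 i j : (0 < P i j) = (val i == 0%N) || (val i == (val j).+1).
Proof.
rewrite PexE; case: eqP => _; first by rewrite invr_gt0 ltr0n.
by case: eqP; rewrite ?ltr01 ?ltxx.
Qed.

Lemma Pex_stochastic : stochastic P.
Proof.
split=> [i j|i].
  by rewrite PexE; case: ifP => _; rewrite ?invr_ge0 ?ler0n //; case: ifP; rewrite ?ler01.
have [/eqP i_eq0 | i_neq0] := boolP (val i == 0%N).
  under eq_bigr do rewrite PexE i_eq0 eqxx.
  by rewrite sumr_const card_ord -[_ *+ n]mulr_natr mulVf // pnatr_eq0 -lt0n.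
rewrite (bigD1 (ord_pred i)) //= Pex_pred // big1 ?addr0 // => j j_neq.
rewrite PexE (negbTE i_neq0); case: eqP => // ij; case/eqP: j_neq; apply: val_inj.
by rewrite /= ij.
Qed.

(* Row i reaches column 0 in i + 1 steps: down the subdiagonal to row 0, then to column 0. *)
Lemma Pex_mxpow_col0 m i : (val i <= m)%N -> (n%:R : R)^-1 ^+ m.+1 <= mxpow P m.+1 i i0.
Proof.
have inv_n0 : 0 <= (n%:R : R)^-1 by rewrite invr_ge0 ler0n.
have inv_n1 : (n%:R : R)^-1 <= 1 by rewrite invf_le1 ?ler1n ?ltr0n.
have [P0 _] := Pex_stochastic.
elim: m i => [|m IH] i im.
  by rewrite mxpowS mulmx1 PexE; move: im; rewrite leqn0 => ->.
have terms_ge0 k : 0 <= P i k * mxpow P m.+1 k i0.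
  by case: (stochastic_mxpow m.+1 Pex_stochastic) => M0 _; rewrite mulr_ge0.
rewrite mxpowS mxE.
have [/eqP i_eq0 | i_neq0] := boolP (val i == 0%N).
  apply: le_trans (ler_term_sum i0 terms_ge0).
  by rewrite PexE i_eq0 exprS ler_wpM2l ?IH.
apply: le_trans (ler_term_sum (ord_pred i) terms_ge0).
rewrite Pex_pred // mul1r; apply: le_trans (IH _ _).
  by rewrite exprS ler_piMl // exprn_ge0.
by rewrite /= -ltnS prednK // lt0n.
Qed.

Definition Pex_weight (j : 'I_n) : R := (n - j)%:R / \sum_(k < n) (n - k)%:R.

Lemma Pex_weight_sum_gt0 : 0 < \sum_(k < n) (n - k)%:R :> R.
Proof.
apply: lt_le_trans (ler_term_sum i0 (fun k => ler0n _ _)).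
by rewrite /= subn0 ltr0n.
Qed.

Lemma Pex_weight_ge0 j : 0 <= Pex_weight j.
Proof. by rewrite divr_ge0 ?ler0n ?ltW ?Pex_weight_sum_gt0. Qed.

Lemma Pex_weight_sum : \sum_j Pex_weight j = 1.
Proof. by rewrite -mulr_suml divff // gt_eqF ?Pex_weight_sum_gt0. Qed.

Lemma Pex_weight_stationary j : \sum_i Pex_weight i * P i j = Pex_weight j.
Proof.
have off_row0 i : i != i0 -> P i j = if val i == (val j).+1 then 1 else 0.
  move=> i_neq0; rewrite PexE ifF //.
  by apply/negbTE; apply: contra i_neq0 => /eqP i_eq0; apply/eqP/val_inj.
rewrite (bigD1 i0) //= PexE eqxx.
have row0 : Pex_weight i0 * n%:R^-1 = (\sum_(k < n) (n - k)%:R)^-1.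
  by rewrite /Pex_weight /= subn0 mulrAC divff ?mul1r // pnatr_eq0 -lt0n.
rewrite row0; have [lt_jn | le_nj] := ltnP (val j).+1 n.
  rewrite [\sum_(i | i != i0) _](bigD1 (Ordinal lt_jn)) //=.
  rewrite off_row0 // eqxx mulr1.
  rewrite [\sum_(i | _ && _) _]big1 ?addr0; last first.
    move=> i /andP[i_neq0 i_neqj]; rewrite off_row0 // ifF ?mulr0 //.
    by apply: contraNF i_neqj => /eqP e; apply/eqP/val_inj.
  rewrite /Pex_weight /= -[X in X + _]mul1r -mulrDl addrC natr1.
  by rewrite subnSK.
rewrite [\sum_(i | i != i0) _]big1 ?addr0; last first.
  move=> i /off_row0 ->.
  by rewrite ifF ?mulr0 //; apply/negbTE; rewrite neq_ltn (leq_trans (ltn_ord i)).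
rewrite /Pex_weight (_ : n - j = 1)%N ?mul1r //.
by move: le_nj (ltn_ord j); rewrite /=; lia.
Qed.

Lemma FP_Pex X j :
  (j \in FP P X) = [exists i in X, (val i == 0%N) || (val i == (val j).+1)].
Proof. by rewrite inE; apply: eq_existsb => i; rewrite Pex_gt0. Qed.

Lemma FP_Pex_setT X : i0 \in X -> FP P X = setT.
Proof.
by move=> X0; apply/setP => j; rewrite FP_Pex inE; apply/existsP; exists i0; rewrite X0.
Qed.

Definition shift k (A : {set 'I_n}) : {set 'I_n} :=
  [set j | [exists i in A, val i == (val j + k)%N]].

Lemma card_shift k A : (#|shift k A| <= #|A|)%N.
Proof.
apply: leq_trans (leq_imset_card (fun i : 'I_n => insubd i (val i - k)%N) A).
apply: subset_leq_card; apply/subsetP => j; rewrite inE => /existsP[i /andP[iA /eqP ij]].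
apply/imsetP; exists i => //; apply: val_inj.
by rewrite ij addnK insubdK //; apply: ltn_ord.
Qed.

Lemma shiftU k A B : shift k (A :|: B) = shift k A :|: shift k B.
Proof.
apply/setP => j; rewrite !inE; apply/existsP/orP.
  case=> i /andP[]; rewrite inE => /orP[] iX ij; [left | right];
    by apply/existsP; exists i; rewrite iX.
by case=> /existsP[i /andP[iX ij]]; exists i; rewrite inE iX ?orbT.
Qed.

Lemma shiftI k A B : shift k (A :&: B) = shift k A :&: shift k B.
Proof.
apply/setP => j; rewrite !inE; apply/existsP/andP.
  case=> i /andP[]; rewrite inE => /andP[iA iB] ij.
  by split; apply/existsP; exists i; rewrite ?iA ?iB.
case=> /existsP[i /andP[iA /eqP ij]] /existsP[i' /andP[i'B /eqP i'j]].
have ii' : i = i' by apply: val_inj; rewrite ij i'j.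
by exists i; rewrite inE iA ii' i'B -ii' ij eqxx.
Qed.

Lemma shift_set0 k : shift k set0 = set0.
Proof. by apply/setP => j; rewrite !inE; apply/existsP => -[i]; rewrite inE. Qed.

Lemma shift0 A : shift 0 A = A.
Proof.
apply/setP => j; rewrite inE addn0; apply/existsP/idP => [[i /andP[iA /eqP ij]]|jA].
  by rewrite (_ : j = i) //; apply: val_inj.
by exists j; rewrite jA eqxx.
Qed.

(* Until a set contains index 0, F_P only moves it down by one. *)
Lemma FPk_Pex_shift k A : (forall i, i \in A -> (k <= val i)%N) -> FPk P k A = shift k A.
Proof.
elim: k => [|k IH] kA; first by rewrite shift0.
rewrite /FPk iterS -/(FPk P k A) IH => [|i /kA/ltnW //].
apply/setP => j; rewrite FP_Pex inE; apply/existsP/existsP.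
  case=> i /andP[]; rewrite inE => /existsP[i' /andP[i'A /eqP i'i]] /orP[/eqP i_eq0|/eqP ij].
    by move: (kA i' i'A); rewrite i'i i_eq0 ltnn.
  by exists i'; rewrite i'A i'i ij addSnnS eqxx.
case=> i /andP[iA /eqP ij].
have lt_jn : ((val j).+1 < n)%N.
  by apply: leq_ltn_trans (ltn_ord i); rewrite ij addnS ltnS leq_addr.
exists (Ordinal lt_jn); rewrite eqxx andbT inE.
by apply/existsP; exists i; rewrite iA ij addSnnS eqxx.
Qed.

Lemma FPk_Pex_setT k A i : i \in A -> (val i < k)%N -> FPk P k A = setT.
Proof.
elim: k i => [//|k IH] i iA ik; rewrite /FPk iterS -/(FPk P k A); apply: FP_Pex_setT.
have [/existsP[i' /andP[i'A i'k]]|/existsPn above_k] := boolP [exists i' in A, val i' < k]%N.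
  by rewrite (IH i' i'A i'k) inE.
rewrite FPk_Pex_shift => [|i' i'A]; last by move: (above_k i'); rewrite i'A -leqNgt.
rewrite inE; apply/existsP; exists i; rewrite iA /= add0n eqn_leq -ltnS ik.
by move: (above_k i); rewrite iA -leqNgt.
Qed.

Lemma s_is_Pex A B x : admissible_pair A B -> x \in A :|: B ->
  (forall y, y \in A :|: B -> (val x <= val y)%N) -> s_is P A B (val x).+1.
Proof.
case/and3P=> A_neq0 B_neq0 AB_disj xAB x_min; apply/and3P; split=> //.
  apply/orP; left; move: xAB; rewrite inE => /orP[xA|xB].
    by rewrite (FPk_Pex_setT xA) // setTI (FPk_neq0 _ Pex_stochastic B_neq0).
  by rewrite (FPk_Pex_setT xB) // setIT (FPk_neq0 _ Pex_stochastic A_neq0).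
apply/forallP => k; apply/implyP => k_gt0.
have below_x (C : {set 'I_n}) : C \subset A :|: B -> forall i, i \in C -> (k <= val i)%N.
  by move=> /subsetP CAB i /CAB /x_min; apply: leq_trans; rewrite -ltnS.
have below_xA := below_x _ (subsetUl A B); have below_xB := below_x _ (subsetUr A B).
rewrite /sia_cond !FPk_Pex_shift //.
have /eqP AB0 : A :&: B == set0 by rewrite setI_eq0.
by rewrite -shiftI AB0 shift_set0 eqxx /= -shiftU -leqNgt card_shift.
Qed.

Lemma Pex_sia_index : (2 <= n)%N -> sia_index_is P n.-1.
Proof.
move=> n_ge2; split.
  move=> A B AB; case/and3P: (AB) => /set0Pn[a aA] /set0Pn[b bB] AB_disj.
  have aAB : a \in A :|: B by rewrite inE aA.
  have bAB : b \in A :|: B by rewrite inE bB orbT.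
  have [x xAB x_min] := arg_minnP (fun x : 'I_n => val x) aAB.
  exists (val x).+1; first exact: s_is_Pex.
  have a_neq_b : val a != val b.
    by rewrite val_eqE; apply: contraTneq bB => <-; rewrite (disjointFr AB_disj aA).
  have a_lt_n : (val a < n)%N := ltn_ord a.
  have b_lt_n : (val b < n)%N := ltn_ord b.
  have x_le_a : (val x <= val a)%N := x_min a aAB.
  have x_le_b : (val x <= val b)%N := x_min b bAB.
  by lia.
have lt_n2 : (n - 2 < n)%N by lia.
have lt_n1 : (n - 1 < n)%N by lia.
have AB : admissible_pair [set Ordinal lt_n2] [set Ordinal lt_n1].
  rewrite /admissible_pair -!card_gt0 !cards1 disjoints1 inE.
  by apply/eqP => /(congr1 val) /=; lia.
exists [set Ordinal lt_n2], [set Ordinal lt_n1]; split=> //.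
rewrite (_ : n.-1 = (n - 2).+1); last by lia.
apply: (s_is_Pex (x := Ordinal lt_n2)) => //; first by rewrite !inE eqxx.
by move=> y; rewrite !inE => /orP[] /eqP -> /=; lia.
Qed.

Lemma Pex_SIA : SIA P.
Proof.
have col0 i : (n%:R : R)^-1 ^+ n <= mxpow P n i i0.
  have := @Pex_mxpow_col0 n.-1 i; rewrite prednK //; apply.
  by rewrite -ltnS prednK //; apply: ltn_ord.
apply: (SIA_Doeblin (c := \row_j Pex_weight j) Pex_stochastic col0).
- by rewrite exprn_gt0 // invr_gt0 ltr0n.
- by move=> j; rewrite mxE Pex_weight_ge0.
- by under eq_bigr do rewrite mxE; exact: Pex_weight_sum.
- apply/rowP => j; rewrite !mxE -Pex_weight_stationary.
  by apply: eq_bigr => i _; rewrite mxE.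
Qed.

End PexMatrix.

Theorem mainTheorem2 (R : archiRealFieldType) (n : nat) :
  (3 <= n)%N ->
  SIA (Pex R n) /\ sia_index_is (Pex R n) n.-1 /\
  (exists Q : 'M[R]_n, V_set n.-1 Q).
Proof.
move=> n_ge3; have n_gt0 : (0 < n)%N by apply: leq_trans n_ge3.
have SIA_P := Pex_SIA R n_gt0.
have index_P := Pex_sia_index R n_gt0 (ltnW n_ge3).
by split; [|split; [|exists (Pex R n)]].
Qed.
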